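(* Let $n\ge8$, and let $d_{\rm YHZ}$ and $d_{\rm QXY}$ be as defined in the context, under the assumption stated there. Then $d_{\rm YHZ}\ge d_{\rm QXY}$.
   Context: Let $a_0,\dots,a_n$ be indeterminates, $P=\sum_{i=0}^na_ix^i$, $\boldsymbol F=(P^{(0)},\dots,P^{(n)})$ with $P^{(k)}$ the $k$-th derivative. $\mathcal M(n)$ is the set of nonincreasing tuples $\boldsymbol\mu=(\mu_1,\dots,\mu_m)$ of positive integers with sum $n$; its conjugate is $\bar{\boldsymbol\mu}=(\bar\mu_1,\bar\mu_2,\dots)$, $\bar\mu_i=\#\{j:\mu_j\ge i\}$; tuples are compared lexicographically after padding with zeros. Subresultants: for $\boldsymbol F=(F_0,\dots,F_t)$, $d_i=\deg F_i$ (formal degree), and $\boldsymbol\delta\in\mathbb{Z}_{\ge0}^t$ with $|\boldsymbol\delta|=\sum\delta_i\le d_0$, put $\delta_0=\max_{\delta_i\neq0,\,i\ge1}(d_i+\delta_i)-d_0$ if this max is $\ge d_0$, else $\delta_0=1$; $\boldsymbol M_{\boldsymbol\delta}(\boldsymbol F)$ is the $(\delta_0+|\boldsymbol\delta|)\times(\delta_0+d_0)$ matrix with rows the coefficient vectors of $x^{\delta_0-1}F_0,\dots,F_0,x^{\delta_1-1}F_1,\dots,F_1,\dots,x^{\delta_t-1}F_t,\dots,F_t$ w.r.t. $x^{\delta_0+d_0-1},\dots,1$; $R_{\boldsymbol\delta}(\boldsymbol F)=\operatorname{dp}\boldsymbol M_{\boldsymbol\delta}(\boldsymbol F)$, where for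 a $p\times q$ matrix ($p\le q$) $\operatorname{dp}\boldsymbol M=\sum_{i=0}^{q-p}\det[\boldsymbol M_1,\dots,\boldsymbol M_{p-1},\boldsymbol M_{q-i}]x^i$; $\overline{R_{\boldsymbol\delta}(\boldsymbol F)}$ is the coefficient of $x^{d_0-|\boldsymbol\delta|}$. For $\boldsymbol\delta$ of length $t\le n$, $R_{\boldsymbol\delta}(\boldsymbol F)=R_{\boldsymbol\delta}(P^{(0)},\dots,P^{(t)})$. Discriminant sequence: for $G=\sum_{i=0}^s b_ix^i$ (formal degree $s$), the discrimination matrix is the $2s\times2s$ matrix whose rows $2k-1$, $2k$ ($k=1,\dots,s$) are the coefficient vectors of $x^{s-k}G$ and $x^{s-k}G'$ w.r.t. $x^{2s-1},\dots,1$; $D_j(G)$ is its leading principal $2j\times2j$ minor. $d_{\rm YHZ}$: for $\boldsymbol\mu\in\mathcal M(n)$ let $\tilde G_0=P$, $\tilde G_i=R_{\bar\mu_i}(\tilde G_{i-1},\tilde G_{i-1}')$ ($i\ge1$) of formal degree $s_i=\sum_{k=i+1}^{\mu_1}\bar\mu_k$; $\mathcal S_{\boldsymbol\mu}$ consists of $D_j(\tilde G_i)$ for $0\le i\le\mu_1-2$, $\bar\mu_{i+1}+1\le j\le s_i$; $D_{s_{\mu_1-1}}(\tilde G_{\mu_1-1})$; and $D_j(\tilde G_i)$ for $0\le i\le\mu_1-1$, $1\le j\le\bar\mu_{i+1}$. $d_{\rm YHZ}$ is the maximal total degree in $a_0,\dots,a_n$ over $\bigcup_{\boldsymbol\mu}\mathcal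 S_{\boldsymbol\mu}$. Assumption: for every $\boldsymbol\mu$ and $0\le i\le\mu_1-1$, the coefficient of $x^{s_i}$ in $\tilde G_i$ and $\overline{R_{s_i}(\tilde G_i,\tilde G_i')}$ are not identically zero. $d_{\rm QXY}$: for $\boldsymbol\mu\in\mathcal M(n)$ let $G_0=P$, $G_i=R_{(\bar\mu_1,\dots,\bar\mu_i)}(\boldsymbol F)$ of formal degree $n-(\bar\mu_1+\dots+\bar\mu_i)$; $\mathcal T_{\boldsymbol\mu}$ consists of the coefficients of $R_{\boldsymbol\gamma}(\boldsymbol F)$ for $\boldsymbol\gamma\in\mathcal M(n)$, $\boldsymbol\gamma\succeq\bar{\boldsymbol\mu}$, and $D_j(G_i)$ for $0\le i\le\mu_1-1$, $1\le j\le\bar\mu_{i+1}$. $d_{\rm QXY}$ is the maximal total degree in $a_0,\dots,a_n$ over $\bigcup_{\boldsymbol\mu}\mathcal T_{\boldsymbol\mu}$. *)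

From HB Require Import structures.
From mathcomp Require Import all_boot all_order all_algebra.
From mathcomp Require Import mpoly.
Set Implicit Arguments. Unset Strict Implicit. Unset Printing Implicit Defensive.
Import Order.TTheory GRing.Theory Num.Theory.
Local Open Scope ring_scope.

Section Defs.
Variable n : nat.

(* coefficient ring Z[a_0, ..., a_n]; a_i is the variable 'X_i *)
Definition A := {mpoly int[n.+1]}.

(* total degree in a_0,...,a_n (the zero polynomial gets degree 0) *)
Definition tdeg (q : A) : nat := (msize q).-1.

Definition Pgen : {poly A} := \sum_(i < n.+1) ('X_i : A) *: 'X^i.

(* A polynomial with a formal degree: (polynomial, formal degree). *)
Definition fpoly := ({poly A} * nat)%type.
Definition fp0 : fpoly := (0, 0%N).

Definition shcoef (e : nat) (f : {poly A}) (k : nat) : A :=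
  if (e <= k)%N then f`_(k - e) else 0.

Definition dp (p q : nat) (M : nat -> nat -> A) : {poly A} :=
  \sum_(i < (q - p).+1)
     (\det (\matrix_(r < p, c < p)
              M r (if (c < p.-1)%N then (c : nat) else (q - 1 - i)%N))) *: 'X^i.

(* delta_0 for F = (F_0,...,F_t), delta = (delta_1,...,delta_t) *)
Definition delta0 (F : seq fpoly) (delta : seq nat) : nat :=
  let d0 := (nth fp0 F 0).2 in
  let m := (\max_(i < size delta | nth 0%N delta i != 0%N)
              ((nth fp0 F i.+1).2 + nth 0%N delta i))%N in
  if has (fun x => x != 0%N) delta && (d0 <= m)%N then (m - d0)%N else 1%N.

(* rows of M_delta(F): (shift exponent, polynomial), in the order
   x^{delta_0-1}F_0,...,F_0, x^{delta_1-1}F_1,...,F_1, ... *)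
Definition subres_rows (F : seq fpoly) (delta : seq nat) : seq (nat * {poly A}) :=
  let dl0 := delta0 F delta in
  [seq ((dl0 - 1 - j)%N, (nth fp0 F 0).1) | j <- iota 0 dl0] ++
  flatten [seq [seq ((nth 0%N delta i - 1 - j)%N, (nth fp0 F i.+1).1)
               | j <- iota 0 (nth 0%N delta i)] | i <- iota 0 (size delta)].

Definition subres_ncols (F : seq fpoly) (delta : seq nat) : nat :=
  (delta0 F delta + (nth fp0 F 0).2)%N.

(* entries of M_delta(F), columns w.r.t. x^{q-1},...,1 *)
Definition subres_mx (F : seq fpoly) (delta : seq nat) (r c : nat) : A :=
  let q := subres_ncols F delta in
  let row := nth (0%N, (0 : {poly A})) (subres_rows F delta) r in
  shcoef row.1 row.2 (q - 1 - c)%N.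

Definition Rsub (F : seq fpoly) (delta : seq nat) : {poly A} :=
  dp (size (subres_rows F delta)) (subres_ncols F delta) (subres_mx F delta).

Definition Rbar (F : seq fpoly) (delta : seq nat) : A :=
  (Rsub F delta)`_((nth fp0 F 0).2 - sumn delta).

Definition Rsub2 (G : {poly A}) (s k : nat) : {poly A} :=
  Rsub [:: (G, s); (G^`(), s.-1)] [:: k].
Definition Rbar2 (G : {poly A}) (s k : nat) : A :=
  Rbar [:: (G, s); (G^`(), s.-1)] [:: k].

Definition discr_mx (G : {poly A}) (s : nat) (r c : nat) : A :=
  shcoef (s - (r./2).+1)%N (if odd r then G^`() else G) (2 * s - 1 - c)%N.
Definition Dj (G : {poly A}) (s j : nat) : A :=
  \det (\matrix_(r < (2 * j)%N, c < (2 * j)%N) discr_mx G s r c).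

Definition Fgen : seq fpoly := [seq (Pgen^`(i), (n - i)%N) | i <- iota 0 n.+1].

End Defs.

Definition partb (m : nat) (s : seq nat) : bool :=
  [&& sorted geq s, all (fun x => 0 < x)%N s & sumn s == m].

Definition ffun_to_seq (m : nat) (f : {ffun 'I_m -> 'I_m.+1}) : seq nat :=
  [seq (f i : nat) | i <- enum 'I_m & (0 < f i)%N].

(* M(m): all nonincreasing tuples of positive integers with sum m
   (each has length <= m and parts <= m, hence arises from some f). *)
Definition Mset (m : nat) : seq (seq nat) :=
  undup [seq ffun_to_seq f | f <- enum {ffun 'I_m -> 'I_m.+1} &
                             partb m (ffun_to_seq f)].

(* conjugate: bar mu_i = #{j : mu_j >= i}, i = 1, ..., mu_1 (1-indexed) *)
Definition conjp (mu : seq nat) (i : nat) : nat := count (fun x => i <= x)%N mu.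
Definition conjseq (mu : seq nat) : seq nat :=
  [seq conjp mu i | i <- iota 1 (head 0%N mu)].

Fixpoint lexle (a b : seq nat) : bool :=
  match a, b with
  | [::], _ => true
  | x :: a', [::] => (x == 0%N) && lexle a' [::]
  | x :: a', y :: b' => (x < y)%N || ((x == y) && lexle a' b')
  end.

Definition sYHZ (mu : seq nat) (i : nat) : nat :=
  (\sum_(i.+1 <= k < (head 0%N mu).+1) conjp mu k)%N.

Fixpoint GYHZ (n : nat) (mu : seq nat) (i : nat) : {poly A n} :=
  match i with
  | 0 => Pgen n
  | i'.+1 => Rsub2 (GYHZ n mu i') (sYHZ mu i') (conjp mu i)
  end.

Definition SYHZ (n : nat) (mu : seq nat) : seq (A n) :=
  let mu1 := head 0%N mu in
  flatten [seq [seq Dj (GYHZ n mu i) (sYHZ mu i) j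
               | j <- iota (conjp mu i.+1).+1 (sYHZ mu i - conjp mu i.+1)]
          | i <- iota 0 (mu1.-1)]
  ++ [:: Dj (GYHZ n mu mu1.-1) (sYHZ mu mu1.-1) (sYHZ mu mu1.-1)]
  ++ flatten [seq [seq Dj (GYHZ n mu i) (sYHZ mu i) j
                  | j <- iota 1 (conjp mu i.+1)]
             | i <- iota 0 mu1].

Definition dYHZ (n : nat) : nat :=
  (\max_(mu <- Mset n) \max_(q <- SYHZ n mu) tdeg q)%N.

Definition YHZ_assumption (n : nat) : Prop :=
  forall mu, mu \in Mset n -> forall i, (i < head 0%N mu)%N ->
    (GYHZ n mu i)`_(sYHZ mu i) != 0 /\
    Rbar2 (GYHZ n mu i) (sYHZ mu i) (sYHZ mu i) != 0.

Definition sQXY (n : nat) (mu : seq nat) (i : nat) : nat :=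
  (n - sumn (take i (conjseq mu)))%N.

Definition GQXY (n : nat) (mu : seq nat) (i : nat) : {poly A n} :=
  if i is 0 then Pgen n else Rsub (Fgen n) (take i (conjseq mu)).

Definition polycoefs (R : nzRingType) (p : {poly R}) : seq R :=
  [seq p`_k | k <- iota 0 (size p)].

Definition TQXY (n : nat) (mu : seq nat) : seq (A n) :=
  flatten [seq polycoefs (Rsub (Fgen n) gamma)
          | gamma <- Mset n & lexle (conjseq mu) gamma]
  ++ flatten [seq [seq Dj (GQXY n mu i) (sQXY n mu i) j
                  | j <- iota 1 (conjp mu i.+1)]
             | i <- iota 0 (head 0%N mu)].

Definition dQXY (n : nat) : nat :=
  (\max_(mu <- Mset n) \max_(q <- TQXY n mu) tdeg q)%N.

From mathcomp Require Import all_boot all_order all_algebra.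
From mathcomp Require Import mpoly zify.
Set Implicit Arguments. Unset Strict Implicit. Unset Printing Implicit Defensive.
Import Order.TTheory GRing.Theory Num.Theory.

(* Both quantities are compared with n^2.  Every polynomial entering d_QXY is a
   form in a_0, ..., a_n whose degree, the number of rows of its defining matrix
   times the degree of the entries, is at most n^2.  Conversely, for the partition
   mu = (3^k, 1^t) with k = n/4 and t = n - 3k, the last discriminant
   D_{s_2}(~G_2) in S_mu is nonzero by the assumption (up to sign it is the leading
   coefficient of ~G_2 times the constant term of R_{s_2}(~G_2, ~G_2')), and it is
   a form of degree 2k (2k - 1) (2(n - 2k) - 1) >= n^2 once n >= 8. *)

Section DetFun.
Variable R : idomainType.
Local Open Scope ring_scope.

Definition det_fun N (f : nat -> nat -> R) := \det (\matrix_(r < N, c < N) f r c).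

Lemma eq_det_fun N f g :
  (forall r c, (r < N)%N -> (c < N)%N -> f r c = g r c) -> det_fun N f = det_fun N g.
Proof.
by move=> fg; rewrite /det_fun; congr (\det _); apply/matrixP => i j; rewrite !mxE fg.
Qed.

Lemma det_fun_col0 N f : (forall r, (0 < r < N.+1)%N -> f r 0%N = 0) ->
  det_fun N.+1 f = f 0%N 0%N * det_fun N (fun r c => f r.+1 c.+1).
Proof.
move=> f_col0; rewrite /det_fun (expand_det_col _ ord0) big_ord_recl big1 ?addr0.
  rewrite mxE /cofactor /= expr0 mul1r; congr (_ * (\det _)).
  by apply/matrixP => i j; rewrite !mxE !lift0.
by move=> i _; rewrite mxE lift0 f_col0 ?mul0r //=; exact: ltn_ord.
Qed.

Lemma det_fun_row_perm_neq0 N f g (s : nat -> nat) :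
  (forall r, (r < N)%N -> (s r < N)%N) -> {in [pred r | (r < N)%N] &, injective s} ->
  (forall r c, (r < N)%N -> (c < N)%N -> f r c = g (s r) c) ->
  det_fun N g != 0 -> det_fun N f != 0.
Proof.
move=> s_lt s_inj fg g_neq0.
pose so (i : 'I_N) : 'I_N := Ordinal (s_lt _ (ltn_ord i)).
have so_inj : injective so.
  by move=> i j /(congr1 val) /= /s_inj e; apply/val_inj/e; rewrite inE.
have -> : det_fun N f = \det (row_perm (perm.perm so_inj) (\matrix_(r < N, c < N) g r c)).
  by rewrite /det_fun; congr (\det _); apply/matrixP => i j; rewrite !mxE perm.permE /= fg.
by rewrite row_permE det_mulmx det_perm mulf_neq0 // signr_eq0.
Qed.

End DetFun.

Section Homogeneity.
Variable n : nat.
Local Notation A := (A n).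
Local Open Scope ring_scope.

Lemma tdeg_homog_le d (q : A) : q \is d.-homog -> (tdeg q <= d)%N.
Proof.
move=> /dhomogP q_d; rewrite /tdeg msizeE.
suff : (\max_(m <- msupp q) (mdeg m).+1 <= d.+1)%N.
  by case: (\max_(m <- msupp q) (mdeg m).+1)%N.
by apply/bigmax_leqP_seq => m mq _; rewrite q_d.
Qed.

Lemma tdeg_homog d (q : A) : q != 0 -> q \is d.-homog -> tdeg q = d.
Proof.
move=> q_neq0 q_homog; apply/eqP; rewrite eqn_leq tdeg_homog_le //=.
move/dhomogP: q_homog => q_d; rewrite /tdeg msizeE.
have := @leq_bigmax_seq _ (msupp q) xpredT (fun m => (mdeg m).+1) _ (mlead_supp q_neq0) isT.
rewrite q_d ?mlead_supp //.
by case: (\max_(m <- msupp q) (mdeg m).+1)%N.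
Qed.

Lemma det_homog e p (M : 'M[A]_p) :
  (forall i j, M i j \is e.-homog) -> \det M \is (p * e).-homog.
Proof.
move=> M_homog; apply: rpred_sum => s _.
have prod_homog k (F : 'I_k -> A) :
    (forall i, F i \is e.-homog) -> \prod_i F i \is (k * e).-homog.
  elim: k F => [|k IHk] F F_homog; first by rewrite big_ord0 dhomog1.
  by rewrite big_ord_recr mulSnr; apply: dhomogM; [apply: IHk|].
have := prod_homog _ _ (fun i => M_homog i (perm.fun_of_perm s i)).
by case: (perm.odd_perm s); rewrite ?expr1 ?expr0 ?mulN1r ?mul1r ?rpredN.
Qed.

Definition homog_poly e (p : {poly A}) := forall k, p`_k \is e.-homog.

Lemma homog_poly0 e : homog_poly e 0.
Proof. by move=> k; rewrite coef0 rpred0. Qed.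

Lemma homog_poly_deriv e p : homog_poly e p -> homog_poly e p^`().
Proof. by move=> p_homog k; rewrite coef_deriv; apply/rpredMn/p_homog. Qed.

Lemma homog_poly_derivn e p i : homog_poly e p -> homog_poly e p^`(i).
Proof.
by move=> p_homog; elim: i => [|i IHi]; rewrite ?derivn0 // derivnS; apply: homog_poly_deriv.
Qed.

Lemma homog_poly_sumX e N (c : 'I_N -> A) :
  (forall i, c i \is e.-homog) -> homog_poly e (\sum_(i < N) c i *: 'X^i).
Proof.
move=> c_homog k; rewrite coef_sum; apply: rpred_sum => i _.
by rewrite coefZ coefXn mulr_natr; apply/rpredMn/c_homog.
Qed.

Lemma shcoef_homog e s p k : homog_poly e p -> shcoef s p k \is e.-homog.
Proof. by move=> p_homog; rewrite /shcoef; case: ifP; rewrite ?rpred0. Qed.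

Lemma homog_poly_dp e p q (M : nat -> nat -> A) :
  (forall r c, M r c \is e.-homog) -> homog_poly (p * e) (dp p q M).
Proof.
by move=> M_homog; apply: homog_poly_sumX => i; apply: det_homog => r c; rewrite mxE.
Qed.

Lemma homog_poly_Pgen : homog_poly 1 (Pgen n).
Proof.
apply: homog_poly_sumX => i.
by rewrite dhomogX; apply/eqP; apply: mdeg1.
Qed.

Lemma homog_poly_Fgen i : homog_poly 1 (nth (fp0 n) (Fgen n) i).1.
Proof.
rewrite /Fgen; have [i_lt|i_ge] := ltnP i (size (iota 0 n.+1)).
  by rewrite (nth_map 0%N) //=; apply/homog_poly_derivn/homog_poly_Pgen.
by rewrite nth_default ?size_map //; apply: homog_poly0.
Qed.

Lemma Dj_homog e G s j : homog_poly e G -> Dj G s j \is (2 * j * e).-homog.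
Proof.
move=> G_homog; apply: det_homog => r c; rewrite mxE /discr_mx.
by apply: shcoef_homog; case: ifP => _ //; apply: homog_poly_deriv.
Qed.

End Homogeneity.

Section SubresultantShape.
Variable n : nat.
Local Notation A := (A n).
Local Notation fp0 := (fp0 n).

Lemma size_subres_rows (F : seq (fpoly n)) delta :
  size (subres_rows F delta) = delta0 F delta + sumn delta.
Proof.
rewrite /subres_rows size_cat size_map size_iota size_flatten; congr addn.
rewrite /shape -map_comp [RHS](_ : _ = sumn (mkseq (nth 0 delta) (size delta))).
  by congr sumn; apply: eq_map => i /=; rewrite size_map size_iota.
by rewrite mkseq_nth.
Qed.

Lemma delta0_le (F : seq (fpoly n)) delta b :
  (forall i, i < size delta -> (nth fp0 F i.+1).2 + nth 0 delta i <= b) ->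
  delta0 F delta <= maxn 1 (b - (nth fp0 F 0).2).
Proof.
move=> F_le; rewrite /delta0 /=.
set m := (\max_(i < size delta | _) _)%N.
have : m <= b by apply/bigmax_leqP => i _; apply: F_le.
by case: ifP => _; lia.
Qed.

Lemma homog_poly_Rsub e (F : seq (fpoly n)) delta :
  (forall i, homog_poly e (nth fp0 F i).1) ->
  homog_poly (size (subres_rows F delta) * e) (Rsub F delta).
Proof.
move=> F_homog; apply: homog_poly_dp => r c; rewrite /subres_mx.
have [r_lt|r_ge] := ltnP r (size (subres_rows F delta)); last first.
  by rewrite nth_default //; apply/shcoef_homog/homog_poly0.
apply: shcoef_homog.
move: (mem_nth (0, 0%R) r_lt); rewrite /subres_rows mem_cat.
by case/orP => [/mapP [j _ ->]|/flattenP [_ /mapP [i _ ->] /mapP [j _ ->]]]; apply: F_homog.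
Qed.

Lemma coef0_dp p q (M : nat -> nat -> A) :
  ((dp p q M)`_0)%R = det_fun p (fun r c => M r (if c < p.-1 then c else q - 1)).
Proof.
rewrite coef_sum big_ord_recl big1 ?addr0 => [|i _].
  by rewrite coefZ coefXn /= mulr1 subn0.
by rewrite coefZ coefXn /= mulr0.
Qed.

End SubresultantShape.

Section PairSubresultant.
Variable n : nat.
Local Notation A := (A n).
Local Open Scope ring_scope.
Variables (G : {poly A}) (s c : nat).
Hypotheses (s_gt0 : (0 < s)%N) (c_gt0 : (0 < c)%N).
Local Notation F := [:: (G, s); (G^`(), s.-1)].

Lemma delta0_pair : delta0 F [:: c] = c.-1.
Proof.
rewrite /delta0 /= big_mkcond big_ord1 /=.
have -> : (c != 0%N) = true by lia.
by case: ifP; lia.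
Qed.

Lemma subres_rows_pair : subres_rows F [:: c] =
  [seq ((c.-1 - 1 - j)%N, G) | j <- iota 0 c.-1] ++
  [seq ((c - 1 - j)%N, G^`()) | j <- iota 0 c].
Proof. by rewrite /subres_rows delta0_pair /= cats0. Qed.

Lemma homog_poly_Rsub2 e :
  homog_poly e G -> homog_poly ((c.-1 + c) * e) (Rsub2 G s c).
Proof.
move=> G_homog; have := @homog_poly_Rsub n e F [:: c].
rewrite size_subres_rows delta0_pair /= addn0; apply.
case=> [|[|i]] //=; first exact: homog_poly_deriv.
by rewrite nth_nil; apply: homog_poly0.
Qed.

Lemma size_Rsub2 : (size (Rsub2 G s c) <= (s - c).+1)%N.
Proof.
have size_sumX N (a : 'I_N -> A) : (size (\sum_(i < N) a i *: 'X^i)%R <= N)%N.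
  elim: N a => [|N IHN] a; first by rewrite big_ord0 size_poly0.
  rewrite big_ord_recr /=; apply: leq_trans (size_polyD _ _) _.
  rewrite geq_max (leq_trans (IHN _)) //=.
  by rewrite (leq_trans (size_scale_leq _ _)) // size_polyXn.
rewrite /Rsub2 /Rsub /dp; apply: leq_trans (size_sumX _ _) _.
by rewrite /subres_ncols size_subres_rows delta0_pair /= addn0; lia.
Qed.

End PairSubresultant.

Section DiscriminantTop.
Local Open Scope ring_scope.

(* Expanding D_s(G) along its first column leaves [G_s] times a row permutation
   of the matrix whose determinant is the constant coefficient [Rbar2 G s s]:
   after the first row, the odd rows of the discrimination matrix are the
   shifts of G' and the even rows the shifts of G. *)
Lemma Dj_full_neq0 n (G : {poly A n}) s : (0 < s)%N -> (size G <= s.+1)%N ->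
  G`_s != 0 -> Rbar2 G s s != 0 -> Dj G s s != 0.
Proof.
move=> s_gt0 G_size Gs_neq0 R_neq0.
set F := [:: (G, s); (G^`(), s.-1)].
have R_det : det_fun (s.-1 + s) (subres_mx F [:: s]) != 0.
  move: R_neq0; rewrite /Rbar2 /Rbar /Rsub /= addn0 subnn coef0_dp.
  rewrite /subres_ncols size_subres_rows /= delta0_pair // addn0.
  rewrite (@eq_det_fun _ _ _ (subres_mx F [:: s])) // => r c _ c_lt.
  by congr subres_mx; case: ifP; lia.
rewrite /Dj -/(det_fun _ (discr_mx G s)) (_ : 2 * s = (s.-1 + s).+1)%N; last by lia.
rewrite det_fun_col0 => [|r /andP [r_gt0 r_lt]]; last first.
  rewrite /discr_mx /shcoef; case: ifP => // shift_le.
  case: (boolP (odd r)) => r_odd; rewrite ?coef_deriv nth_default ?mul0rn //.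
  1,2: by apply: leq_trans G_size _; lia.
have -> : discr_mx G s 0 0 = G`_s by rewrite /discr_mx /shcoef /= ifT; [congr nth; lia | lia].
apply: mulf_neq0; first exact: Gs_neq0.
apply: (det_fun_row_perm_neq0 (s := fun r => if odd r then r./2 else (s.-1 + r./2)%N)) R_det.
- by move=> r r_lt; case: ifP; lia.
- by move=> x y; rewrite !inE; case: ifP => ?; case: ifP => ?; lia.
move=> r c r_lt c_lt.
rewrite /subres_mx /subres_ncols delta0_pair // subres_rows_pair // nth_cat size_map size_iota.
rewrite /discr_mx /=; case: (boolP (odd r)) => r_odd /=.
  rewrite ifT; last by lia.
  by rewrite (nth_map 0%N) ?size_iota ?nth_iota; [congr shcoef => /=; lia | lia | lia].
rewrite ifF; last by lia.
by rewrite (nth_map 0%N) ?size_iota ?nth_iota; [congr shcoef => /=; lia | lia | lia].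
Qed.

End DiscriminantTop.

Lemma size_le_sumn s : all (fun x => 0 < x) s -> size s <= sumn s.
Proof. by elim: s => //= x s IHs /andP [x_gt0 /IHs]; lia. Qed.

Lemma mem_le_sumn x s : x \in s -> x <= sumn s.
Proof. by elim: s => //= y s IHs; rewrite inE => /orP [/eqP ->|/IHs]; lia. Qed.

Lemma mem_Mset m mu : (mu \in Mset m) = partb m mu.
Proof.
apply/idP/idP.
  by rewrite /Mset mem_undup => /mapP [f]; rewrite mem_filter => /andP [mu_part _] ->.
move=> mu_part; have /and3P [_ mu_pos /eqP mu_sum] := mu_part.
have size_le : size mu <= m by rewrite -mu_sum size_le_sumn.
have nth_le j : nth 0 mu j <= m.
  have [j_lt|j_ge] := ltnP j (size mu); last by rewrite nth_default.
  by rewrite -mu_sum mem_le_sumn // mem_nth.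
pose f := [ffun i : 'I_m => (inord (nth 0 mu i) : 'I_m.+1)].
suff mu_f : mu = ffun_to_seq f.
  by rewrite /Mset mem_undup mu_f map_f // mem_filter mem_enum andbT -mu_f.
have f_val : [seq (f i : nat) | i <- enum 'I_m] = map (nth 0 mu) (iota 0 m).
  by rewrite -val_enum_ord -map_comp; apply: eq_map => i /=; rewrite ffunE inordK // ltnS.
have tail0 : [seq x <- map (nth 0 mu) (iota (0 + size mu) (m - size mu)) | 0 < x] = [::].
  rewrite filter_map (eq_in_filter (a2 := pred0)) ?filter_pred0 // => j.
  by rewrite mem_iota /= => /andP [j_ge _]; rewrite nth_default.
rewrite /ffun_to_seq -filter_map f_val -(subnKC size_le) iotaD map_cat filter_cat tail0 cats0.
by rewrite -/(mkseq _ _) mkseq_nth; apply/esym/all_filterP.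
Qed.

Lemma conjp_gt0 mu i : 0 < i <= head 0 mu -> 0 < conjp mu i.
Proof. by case: mu => [|x s] /=; [lia | rewrite /conjp /= => /andP [_ ->]]. Qed.

Lemma conjp_le_size mu i : conjp mu i <= size mu.
Proof. exact: count_size. Qed.

Lemma conjp_anti mu i j : i <= j -> conjp mu j <= conjp mu i.
Proof. by move=> le_ij; apply: sub_count => x /=; apply: leq_trans. Qed.

Lemma size_conjseq mu : size (conjseq mu) = head 0 mu.
Proof. by rewrite size_map size_iota. Qed.

Lemma nth_conjseq mu i : i < head 0 mu -> nth 0 (conjseq mu) i = conjp mu i.+1.
Proof. by move=> i_lt; rewrite /conjseq (nth_map 0) ?size_iota // nth_iota // add1n. Qed.

Lemma conjseq_le mu x : x \in conjseq mu -> x <= conjp mu 1.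
Proof. by case/mapP => l; rewrite mem_iota => /andP [l_ge _] ->; apply: conjp_anti. Qed.

(* A part y of mu is counted in conjp mu i only for i <= y, hence at most y times. *)
Lemma sumn_conjseq mu : sumn (conjseq mu) <= sumn mu.
Proof.
rewrite /conjseq /conjp; elim: mu (head 0 mu) => [|y s IHs] m /=; first by elim: (iota 1 m).
have sum_le a k : sumn [seq nat_of_bool (i <= y) | i <- iota a.+1 k] <= y - a.
  by elim: k a => [|k IHk] a //=; have := IHk a.+1; case: leqP => /=; lia.
have -> : forall r, sumn [seq (i <= y) + count (fun x => i <= x) s | i <- r] =
    sumn [seq nat_of_bool (i <= y) | i <- r] + sumn [seq count (fun x => i <= x) s | i <- r].
  by elim=> //= i r ->; lia.
by have := sum_le 0 m; have := IHs m; lia.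
Qed.

Section YHZLowerBound.
Variables (n : nat) (mu : seq nat).
Local Notation m := (head 0 mu).

Lemma sYHZ_rec i : i < m -> sYHZ mu i = conjp mu i.+1 + sYHZ mu i.+1.
Proof. by move=> i_lt; rewrite /sYHZ big_ltn. Qed.

Lemma sYHZ_gt0 i : i < m -> 0 < sYHZ mu i.
Proof. by move=> i_lt; rewrite sYHZ_rec // addn_gt0 conjp_gt0 // ltnS. Qed.

Lemma homog_poly_GYHZ i : i <= m ->
  homog_poly (\prod_(1 <= l < i.+1) ((conjp mu l).-1 + conjp mu l)) (GYHZ n mu i).
Proof.
elim: i => [_|i IHi i_lt]; first by rewrite big_geq //; apply: homog_poly_Pgen.
rewrite big_nat_recr //= mulnC; apply: homog_poly_Rsub2.
- exact: sYHZ_gt0.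
- by rewrite conjp_gt0 // i_lt.
- by apply: IHi; apply: ltnW.
Qed.

Lemma size_GYHZ i : 0 < i <= m -> size (GYHZ n mu i) <= (sYHZ mu i).+1.
Proof.
case: i => [//|i] /= i_lt; apply: leq_trans (size_Rsub2 _ _ _) _.
- exact: sYHZ_gt0.
- by rewrite conjp_gt0.
by rewrite sYHZ_rec // addKn.
Qed.

Lemma dYHZ_ge : mu \in Mset n -> 1 < m -> YHZ_assumption n ->
  2 * sYHZ mu m.-1 * \prod_(1 <= l < m) ((conjp mu l).-1 + conjp mu l) <= dYHZ n.
Proof.
move=> mu_in m_gt1 nondeg; set i := m.-1.
have i_range : 0 < i <= m by rewrite /i; lia.
have i_lt : i < m by rewrite /i; lia.
have [lead_neq0 Rbar_neq0] := nondeg mu mu_in i i_lt.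
have D_neq0 := Dj_full_neq0 (sYHZ_gt0 i_lt) (size_GYHZ i_range) lead_neq0 Rbar_neq0.
have D_mem : Dj (GYHZ n mu i) (sYHZ mu i) (sYHZ mu i) \in SYHZ n mu.
  by rewrite /SYHZ !mem_cat inE eqxx orbT.
apply: (bigmaxn_sup_seq _ mu_in) => //; apply: (bigmaxn_sup_seq _ D_mem) => //.
rewrite (tdeg_homog D_neq0 (Dj_homog _ _ (homog_poly_GYHZ (ltnW i_lt)))).
by rewrite /i prednK ?mulnA // ltnW.
Qed.

End YHZLowerBound.

Section Witness.
Variables k t : nat.
Hypothesis k_gt0 : 0 < k.

Definition partition31 := nseq k 3 ++ nseq t 1.

Lemma conjp_partition31 l : conjp partition31 l = (l <= 3) * k + (l <= 1) * t.
Proof. by rewrite /conjp count_cat !count_nseq. Qed.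

Lemma head_partition31 : head 0 partition31 = 3.
Proof. by rewrite /partition31; case: k k_gt0. Qed.

Lemma partition31_Mset : partition31 \in Mset (3 * k + t).
Proof.
rewrite mem_Mset; apply/and3P; split.
- rewrite /partition31; elim: k => [|a IHa] /=.
    elim: t => [|b IHb] //=.
    by rewrite (path_sortedE (rev_trans leq_trans)) IHb all_nseq /= orbT.
  by rewrite (path_sortedE (rev_trans leq_trans)) IHa all_cat !all_nseq /= !orbT.
- by rewrite all_cat !all_nseq /= !orbT.
- by rewrite sumn_cat !sumn_nseq; apply/eqP; lia.
Qed.

Lemma dYHZ_ge_partition31 : YHZ_assumption (3 * k + t) ->
  2 * k * (((k + t).-1 + (k + t)) * (k.-1 + k)) <= dYHZ (3 * k + t).
Proof.
move=> nondeg; have := dYHZ_ge partition31_Mset _ nondeg.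
have s2 : sYHZ partition31 2 = k.
  by rewrite /sYHZ head_partition31 big_nat1 conjp_partition31 /=; lia.
rewrite head_partition31 s2 big_ltn // big_nat1 !conjp_partition31 /=.
by rewrite !(muln1, mul1n, muln0, addn0); apply.
Qed.

End Witness.

Lemma sqr_le_dYHZ n : 8 <= n -> YHZ_assumption n -> n * n <= dYHZ n.
Proof.
move=> n_ge8; have [k [r [k_ge2 r_lt4 ->]]] :
    exists k r, [/\ 2 <= k, r < 4 & n = 3 * k + (k + r)].
  by exists (n %/ 4), (n %% 4); split; lia.
move=> nondeg; apply: leq_trans (dYHZ_ge_partition31 _ nondeg); last by lia.
by move: nondeg r_lt4; case: r => [|[|[|[|?]]]] _ r_lt4; nia.
Qed.

Section QXYUpperBound.
Variable n : nat.
Hypothesis n_ge2 : 2 <= n.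
Local Notation fp0 := (fp0 n).

Lemma Fgen_deg m : (nth fp0 (Fgen n) m).2 <= n - m.
Proof.
rewrite /Fgen; have [m_lt|m_ge] := ltnP m n.+1.
  by rewrite (nth_map 0) ?size_iota // nth_iota.
by rewrite nth_default ?size_map ?size_iota.
Qed.

Lemma delta0_Fgen_le delta b : (forall x, x \in delta -> x <= b) ->
  delta0 (Fgen n) delta <= maxn 1 b.-1.
Proof.
move=> delta_le; apply: leq_trans (delta0_le (b := n - 1 + b) _) _.
  move=> i i_lt; apply: leq_trans (leq_add (Fgen_deg i.+1) (delta_le _ (mem_nth 0 i_lt))) _.
  by rewrite leq_add2r leq_sub2l.
by rewrite /= subn0; lia.
Qed.

Lemma homog_poly_Rsub_Fgen delta :
  homog_poly (size (subres_rows (Fgen n) delta)) (Rsub (Fgen n) delta).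
Proof. by have := @homog_poly_Rsub n 1 (Fgen n) delta (@homog_poly_Fgen n); rewrite muln1. Qed.

Lemma tdeg_coef_Rsub_Fgen gamma k : gamma \in Mset n ->
  tdeg ((Rsub (Fgen n) gamma)`_k)%R <= n * n.
Proof.
rewrite mem_Mset => /and3P [_ _ /eqP gamma_sum].
apply: leq_trans (tdeg_homog_le (homog_poly_Rsub_Fgen _ k)) _.
have gamma_le x : x \in gamma -> x <= n by rewrite -gamma_sum; apply: mem_le_sumn.
by rewrite size_subres_rows gamma_sum; have := delta0_Fgen_le gamma_le; nia.
Qed.

(* For i > 0, D_j(G_i) has degree 2 j (delta_0 + S) where j <= c := bar mu_(i+1)
   and S := bar mu_1 + ... + bar mu_i; both delta_0 and bar mu_1 are at most S,
   and 4 c S <= (c + S)^2 <= n^2. *)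
Lemma tdeg_Dj_GQXY mu i j : mu \in Mset n -> i < head 0 mu -> j <= conjp mu i.+1 ->
  tdeg (Dj (GQXY n mu i) (sQXY n mu i) j) <= n * n.
Proof.
rewrite mem_Mset => /and3P [_ mu_pos /eqP mu_sum] i_lt j_le.
have c1_le : conjp mu 1 <= n.
  by rewrite -mu_sum; apply: leq_trans (conjp_le_size _ _) (size_le_sumn mu_pos).
have c_le : conjp mu i.+1 <= conjp mu 1 by apply: conjp_anti.
case: i i_lt j_le c_le => [|i] i_lt j_le c_le.
  by apply: leq_trans (tdeg_homog_le (Dj_homog _ _ (@homog_poly_Pgen n))) _; nia.
set delta := take i.+1 (conjseq mu).
apply: leq_trans (tdeg_homog_le (Dj_homog _ _ (homog_poly_Rsub_Fgen delta))) _.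
have S_ge : conjp mu 1 <= sumn delta.
  by rewrite /delta /conjseq; case: (head 0 mu) i_lt => [|h] //= _; lia.
have cS_le : conjp mu i.+2 + sumn delta <= n.
  have : sumn (take i.+2 (conjseq mu)) <= n.
    rewrite -mu_sum; apply: leq_trans (sumn_conjseq mu).
    by rewrite -{2}(cat_take_drop i.+2 (conjseq mu)) sumn_cat leq_addr.
  by rewrite (take_nth 0) ?size_conjseq // -cats1 sumn_cat nth_conjseq //= addn0 addnC.
have c1_gt0 : 0 < conjp mu 1 by apply: conjp_gt0; lia.
have d0_le : delta0 (Fgen n) delta <= sumn delta.
  apply: leq_trans (delta0_Fgen_le (b := conjp mu 1) _) _; last by lia.
  by move=> x /mem_take /conjseq_le.
rewrite size_subres_rows; apply: (@leq_trans (4 * (conjp mu i.+2 * sumn delta))); nia.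
Qed.

Lemma dQXY_le_sqr : dQXY n <= n * n.
Proof.
apply/bigmax_leqP_seq => mu mu_in _; apply/bigmax_leqP_seq => q; rewrite /TQXY mem_cat.
case/orP => /flattenP [s].
  case/mapP => gamma; rewrite mem_filter => /andP [_ gamma_in] -> /mapP [k _ ->] _.
  exact: tdeg_coef_Rsub_Fgen.
case/mapP => i; rewrite mem_iota => i_lt -> /mapP [j]; rewrite mem_iota => j_range -> _.
by apply: tdeg_Dj_GQXY => //; lia.
Qed.

End QXYUpperBound.

Theorem mainTheorem8 (n : nat) :
  (8 <= n)%N -> YHZ_assumption n -> (dQXY n <= dYHZ n)%N.
Proof.
move=> n_ge8 nondeg.
by apply: leq_trans (dQXY_le_sqr _) (sqr_le_dYHZ n_ge8 nondeg); lia.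
Qed.
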